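(* Let $R$ be a commutative Noetherian ring, $s\in R$ and $r\ge2$. Then there exists $k\in\mathbb{N}$ such that for every column $b^+=(b_1,\ldots,b_r)^t\in R^r$ with $s\in\langle b_1,\ldots,b_r\rangle$ and every column $b^-=(b_{-r},\ldots,b_{-1})^t\in R^r$ such that $\sum_{i=1}^rb_ib_{-i}=0$ and every entry $b_{-i}$ is divisible by $s^k$, there exists $M\in\Theta(r,R)$ with $b^-=Mb^+$.
   Context: For an $r\times r$ matrix $g$ with rows and columns indexed $1,\ldots,r$, its antidiagonal transpose $g^{\tau}$ has entries $(g^\tau)_{i,j}=g_{r+1-j,r+1-i}$. $\Theta(r,R)$ is the set of $r\times r$ matrices $M$ over $R$ with $M^{\tau}=-M$ and all antidiagonal entries $M_{i,r+1-i}$ equal to zero. *)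

From mathcomp Require Import all_boot all_order all_algebra.
Set Implicit Arguments. Unset Strict Implicit. Unset Printing Implicit Defensive.
Import GRing.Theory.
Local Open Scope ring_scope.

Definition is_ideal (R : comRingType) (I : R -> Prop) : Prop :=
  [/\ I 0, (forall x y, I x -> I y -> I (x + y)) & (forall a x, I x -> I (a * x))].

Definition noetherian (R : comRingType) : Prop :=
  forall I : nat -> R -> Prop,
    (forall n, is_ideal (I n)) ->
    (forall n x, I n x -> I n.+1 x) ->
    exists N, forall n, (N <= n)%N -> forall x, I n x <-> I N x.

(* Antidiagonal transpose: (g^tau)_{i,j} = g_{r+1-j, r+1-i} (0-indexed: rev_ord). *)
Definition antitr (R : Type) (r : nat) (g : 'M[R]_r) : 'M[R]_r :=
  \matrix_(i, j) g (rev_ord j) (rev_ord i).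

Definition inTheta (R : comRingType) (r : nat) (M : 'M[R]_r) : Prop :=
  antitr M = - M /\ (forall i : 'I_r, M i (rev_ord i) = 0).

From mathcomp Require Import all_boot all_order all_algebra.
Local Open Scope ring_scope.
Import GRing.Theory.

(* The annihilators of s, s^2, s^3, ... form an ascending chain of ideals, so
   for some N, s^(N+1) x = 0 implies s^N x = 0.  Take k = N + 1 and write
   b^- = s^(N+1) c = s d with d = s^N c.  Since s^(N+1) kills sum_i b_i c_(-i),
   so does s^N, i.e. sum_i b_i d_(-i) = 0.  With s = sum_i a_i b_i, the matrix
   M_(p,q) = d_p a_q - d_(-q) a_(-p) lies in Theta(r, R), and
   (M b^+)_p = d_p s - a_(-p) sum_q b_q d_(-q) = s d_p = (b^-)_p. *)

Lemma is_ideal_annihilator {R : comRingType} (a : R) :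
  is_ideal (fun x => a * x = 0).
Proof.
split=> [|x y ax ay|b x ax]; first exact: mulr0.
  by rewrite mulrDr ax ay addr0.
by rewrite mulrCA ax mulr0.
Qed.

Lemma noetherian_annihilator_expS {R : comRingType} (s : R) :
  noetherian R -> exists N, forall x, s ^+ N.+1 * x = 0 -> s ^+ N * x = 0.
Proof.
move=> noethR.
have ann_incr n x : s ^+ n * x = 0 -> s ^+ n.+1 * x = 0.
  by move=> snx; rewrite exprS -mulrA snx mulr0.
have [N stable] := noethR _ (fun n => is_ideal_annihilator (s ^+ n)) ann_incr.
by exists N => x; apply: (stable N.+1 (leqnSn N) x).1.
Qed.

Section ThetaMatrix.

Variables (R : comRingType) (r : nat).
Implicit Types (d a : 'I_r -> R) (b : 'cV[R]_r).

Definition theta_mx d a : 'M[R]_r :=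
  \matrix_(p, q) (d p * a q - d (rev_ord q) * a (rev_ord p)).

Lemma theta_mx_inTheta d a : inTheta (theta_mx d a).
Proof.
split=> [|i]; last by rewrite mxE rev_ordK subrr.
apply/matrixP => i j; rewrite !mxE !rev_ordK.
by rewrite opprB mulrC [d i * _]mulrC.
Qed.

Lemma theta_mx_mul d a b :
  theta_mx d a *m b =
  \col_p (d p * \sum_q a q * b q 0 - a (rev_ord p) * \sum_q b q 0 * d (rev_ord q)).
Proof.
apply/matrixP => p z; rewrite (ord1 z) !mxE !mulr_sumr -sumrB.
apply: eq_bigr => q _; rewrite mxE mulrBl.
by rewrite mulrA [b q 0 * _]mulrC mulrA [a _ * d _]mulrC.
Qed.

End ThetaMatrix.

Arguments theta_mx {R r}.

(* bp i = b_{i+1};  bm j = b_{-(r-j)} (0-indexed), so b_{-(i+1)} = bm (rev_ord i). *)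
Theorem lemma11 (R : comRingType) (s : R) (r : nat) :
  noetherian R -> (2 <= r)%N ->
  exists k : nat,
    forall bp bm : 'cV[R]_r,
      (exists a : 'I_r -> R, s = \sum_(i < r) a i * bp i 0) ->
      \sum_(i < r) bp i 0 * bm (rev_ord i) 0 = 0 ->
      (forall i : 'I_r, exists c : R, bm i 0 = s ^+ k * c) ->
      exists M : 'M[R]_r, inTheta M /\ bm = M *m bp.
Proof.
move=> noethR _.
have [N annN] := noetherian_annihilator_expS s noethR.
exists N.+1 => bp bm [a sE] orth divk.
have [c bmE] := fin_all_exists divk.
pose d i := s ^+ N * c i.
have orth_d : \sum_i bp i 0 * d (rev_ord i) = 0.
  rewrite /d; under eq_bigr do rewrite mulrCA; rewrite -mulr_sumr; apply: annN.
  by rewrite mulr_sumr -[RHS]orth; apply: eq_bigr => i _; rewrite bmE mulrCA.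
exists (theta_mx d a); split; first exact: theta_mx_inTheta.
apply/matrixP => p z; rewrite (ord1 z) theta_mx_mul mxE -sE orth_d.
by rewrite mulr0 subr0 bmE /d exprS -mulrA mulrC.
Qed.
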